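(* Fix $1<p,q<\infty$ with $\frac1p+\frac1q=1$, an integer $r>1$, and put $s=r^{1/p}$. Then for every $x\in\mathcal N_s^{(p)}$ we have $\|x\|_p^p\le |x|_{p,r}$.
   Context: For $\alpha>0$ let $C_\alpha=\{\pm\alpha^j: j\in\mathbb Z\}\cup\{0\}$, $\mathcal N_\alpha=\{x\in c_{00}: x(i)\in C_\alpha \text{ for all } i\}$ ($c_{00}$ = finitely supported real sequences), and $\mathcal N_\alpha^{(p)}=\mathcal N_\alpha\cap B_{\ell_p}$. Let $K^{\mathcal M}_{q,r}$ be the smallest subset of $c_{00}$ containing all $\pm e_n$ and such that whenever $y_1,\dots,y_l\in K^{\mathcal M}_{q,r}$, $l\le r$, have pairwise disjoint supports, then $r^{-1/q}(y_1+\dots+y_l)\in K^{\mathcal M}_{q,r}$. Define $|x|_{p,r}=\sup\{\sum_i x(i)y(i): y\in K^{\mathcal M}_{q,r}\}$. *)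

From Stdlib Require Import Reals ZArith.
From Coquelicot Require Import Coquelicot.
Open Scope R_scope.

Definition c00 (x : nat -> R) : Prop :=
  exists N : nat, forall i : nat, (N <= i)%nat -> x i = 0.

(* nonnegative real power with 0^a = 0 (a > 0 in all uses) *)
Definition rpow (a b : R) : R := if Rle_dec a 0 then 0 else Rpower a b.

Definition C_set (alpha t : R) : Prop :=
  t = 0 \/ exists j : Z, t = powerRZ alpha j \/ t = - powerRZ alpha j.

Definition lp_norm (p : R) (x : nat -> R) : R :=
  rpow (Series (fun i => rpow (Rabs (x i)) p)) (1 / p).

Definition N_alpha_p (alpha p : R) (x : nat -> R) : Prop :=
  c00 x /\ (forall i, C_set alpha (x i)) /\ lp_norm p x <= 1.

Definition unit_vec (n : nat) : nat -> R := fun i => if Nat.eqb i n then 1 else 0.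

Inductive KM (q : R) (r : nat) : (nat -> R) -> Prop :=
| KM_pos (n : nat) : KM q r (unit_vec n)
| KM_neg (n : nat) : KM q r (fun i => - unit_vec n i)
| KM_comb (l : nat) (ys : nat -> nat -> R) :
    (1 <= l)%nat -> (l <= r)%nat ->
    (forall k, (k < l)%nat -> KM q r (ys k)) ->
    (forall k k' i, (k < l)%nat -> (k' < l)%nat -> k <> k' ->
        ys k i <> 0 -> ys k' i = 0) ->
    KM q r (fun i => Rpower (INR r) (- (1 / q)) * sum_f_R0 (fun k => ys k i) (l - 1)).

Definition inner (x y : nat -> R) : R := Series (fun i => x i * y i).

Definition norm_pr (q : R) (r : nat) (x : nat -> R) : Rbar :=
  Lub_Rbar (fun t => exists y, KM q r y /\ t = inner x y).

(* Every nonzero coordinate of x is ±r^(-k/p) with k ∈ ℕ, so ‖x‖_p^p = Σ_j r^(-k_j) ≤ 1.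
   Attach to coordinate j the vector r^(-k_j/q) (±e_j): since r^(-k/p) r^(-k/q) = r^(-k), the
   sum y of these vectors satisfies <x, y> = ‖x‖_p^p, and it remains to see y ∈ K^M_{q,r}.
   This is Kraft's inequality in disguise.  Among the terms r^(-k/q) z of largest depth
   k = D + 1, replace each group of at most r terms by the single term
   r^(-D/q) · r^(-1/q) (z_1 + ... + z_l), one application of the rule defining K^M_{q,r}.
   This keeps the sum y and, as all other depths are at most D, keeps the Kraft sum Σ r^(-k)
   at most 1: the one incomplete group can only round it up to the next multiple of r^(-D).
   At depth 0 a single term, an element of K^M_{q,r}, is left. *)

From Stdlib Require Import Reals ZArith.
From Coquelicot Require Import Coquelicot.
From Stdlib Require Import Lia Lra List.
Open Scope R_scope.

Definition sumR {A} (g : A -> R) (l : list A) : R := fold_right (fun a s => g a + s) 0 l.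
Definition sumN {A} (g : A -> nat) (l : list A) : nat :=
  fold_right (fun a s => (g a + s)%nat) 0%nat l.

Lemma sumR_app {A} (g : A -> R) l1 l2 : sumR g (l1 ++ l2) = sumR g l1 + sumR g l2.
Proof. unfold sumR. induction l1 as [|a l1 IH]; simpl; [lra|]. rewrite IH. lra. Qed.

Lemma sumN_app {A} (g : A -> nat) l1 l2 : sumN g (l1 ++ l2) = (sumN g l1 + sumN g l2)%nat.
Proof. unfold sumN. induction l1 as [|a l1 IH]; simpl; [lia|]. rewrite IH. lia. Qed.

Lemma sumR_filter {A} (g : A -> R) (P : A -> bool) l :
  sumR g l = sumR g (filter P l) + sumR g (filter (fun a => negb (P a)) l).
Proof. unfold sumR. induction l as [|a l IH]; simpl; [lra|]. destruct (P a); simpl; lra. Qed.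

Lemma sumN_filter {A} (g : A -> nat) (P : A -> bool) l :
  sumN g l = (sumN g (filter P l) + sumN g (filter (fun a => negb (P a)) l))%nat.
Proof. unfold sumN. induction l as [|a l IH]; simpl; [lia|]. destruct (P a); simpl; lia. Qed.

Lemma sumR_0 {A} (g : A -> R) l : (forall a, In a l -> g a = 0) -> sumR g l = 0.
Proof.
  unfold sumR. induction l as [|a l IH]; simpl; intros H; [lra|]. rewrite H, IH; auto; lra.
Qed.

Lemma sumN_const {A} (g : A -> nat) c l :
  (forall a, In a l -> g a = c) -> sumN g l = (length l * c)%nat.
Proof. unfold sumN. induction l as [|a l IH]; simpl; intros H; [lia|]. rewrite H, IH; auto. Qed.

Lemma sum_f_R0_nth {A} (g : A -> R) l d :
  l <> nil -> sum_f_R0 (fun k => g (nth k l d)) (length l - 1) = sumR g l.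
Proof.
  induction l as [|a l IH]; intros Hl; [congruence|].
  destruct l as [|b l]; [simpl; lra|].
  replace (length (a :: b :: l) - 1)%nat with (S (length (b :: l) - 1)) by (simpl; lia).
  rewrite decomp_sum by lia.
  specialize (IH ltac:(discriminate)). simpl in IH |- *. rewrite IH. reflexivity.
Qed.

(* [Item k y] stands for the term r^(-k/q) y of a sum; k is its depth. *)
Record item : Type := Item { depth : nat; vec : nat -> R }.

Definition support_ind (v : R) : nat := if Req_EM_T v 0 then 0 else 1.

Definition supp_count (i : nat) (L : list item) : nat := sumN (fun it => support_ind (vec it i)) L.

Definition supp_disjoint (L : list item) : Prop := forall i, (supp_count i L <= 1)%nat.

Lemma support_ind_0 : support_ind 0 = 0%nat.
Proof. unfold support_ind. destruct (Req_EM_T 0 0); [reflexivity|congruence]. Qed.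

Lemma support_ind_le_1 v : (support_ind v <= 1)%nat.
Proof. unfold support_ind. destruct (Req_EM_T v 0); lia. Qed.

Lemma supp_count_app i L1 L2 :
  supp_count i (L1 ++ L2) = (supp_count i L1 + supp_count i L2)%nat.
Proof. apply sumN_app. Qed.

Lemma supp_count_0 i L it : supp_count i L = 0%nat -> In it L -> vec it i = 0.
Proof.
  induction L as [|a L IH]; simpl; [tauto|]. unfold supp_count, sumN, support_ind in *; simpl.
  destruct (Req_EM_T (vec a i) 0) as [E|E]; [|lia].
  intros H [<-|Hin]; auto.
Qed.

Lemma supp_count_nth_1 i L d k :
  (k < length L)%nat -> vec (nth k L d) i <> 0 -> (1 <= supp_count i L)%nat.
Proof.
  intros Hk Hv. destruct (supp_count i L) eqn:E; [|lia].
  exfalso. apply Hv, (supp_count_0 i L _ E), nth_In, Hk.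
Qed.

Lemma supp_count_nth_2 i L d k k' :
  (k < length L)%nat -> (k' < length L)%nat -> k <> k' ->
  vec (nth k L d) i <> 0 -> vec (nth k' L d) i <> 0 -> (2 <= supp_count i L)%nat.
Proof.
  revert k k'. induction L as [|a L IH]; simpl; intros k k' Hk Hk' Hkk' Hv Hv'; [lia|].
  change (supp_count i (a :: L)) with (support_ind (vec a i) + supp_count i L)%nat.
  unfold support_ind at 1.
  destruct k as [|k], k' as [|k']; try lia.
  - destruct (Req_EM_T (vec a i) 0); [contradiction|].
    pose proof (supp_count_nth_1 i L d k' ltac:(lia) Hv'). lia.
  - destruct (Req_EM_T (vec a i) 0); [contradiction|].
    pose proof (supp_count_nth_1 i L d k ltac:(lia) Hv). lia.
  - pose proof (IH k k' ltac:(lia) ltac:(lia) ltac:(lia) Hv Hv'). lia.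
Qed.

Section Kraft.

Variables (q : R) (r : nat).
Hypothesis r_pos : (0 < r)%nat.

Definition weight (k : nat) : R := Rpower (INR r) (- INR k / q).

Definition weighted_sum (L : list item) (i : nat) : R :=
  sumR (fun it => weight (depth it) * vec it i) L.

(* r^N times the Kraft sum Σ r^(-depth); N must bound every depth (truncated subtraction). *)
Definition kraft_sum (N : nat) (L : list item) : nat := sumN (fun it => r ^ (N - depth it))%nat L.

Lemma weight_0 : weight 0 = 1.
Proof.
  unfold weight. replace (- INR 0 / q) with 0 by (simpl; unfold Rdiv; ring).
  apply Rpower_O, lt_0_INR, r_pos.
Qed.

Lemma weight_S D : weight D * Rpower (INR r) (- (1 / q)) = weight (S D).
Proof. unfold weight. rewrite <- Rpower_plus, S_INR. f_equal. unfold Rdiv. ring. Qed.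

Lemma weighted_sum_app L1 L2 i : weighted_sum (L1 ++ L2) i = weighted_sum L1 i + weighted_sum L2 i.
Proof. apply sumR_app. Qed.

Lemma weighted_sum_supp_count_0 i L : supp_count i L = 0%nat -> weighted_sum L i = 0.
Proof.
  intros H. apply sumR_0. intros it Hit. rewrite (supp_count_0 i L it H Hit). ring.
Qed.

Lemma weighted_sum_const_depth k L i : (forall it, In it L -> depth it = k) ->
  weighted_sum L i = weight k * sumR (fun it => vec it i) L.
Proof.
  unfold weighted_sum, sumR. induction L as [|a L IH]; simpl; intros H; [ring|].
  rewrite H, IH by auto. ring.
Qed.

Lemma kraft_sum_const_depth N L : (forall it, In it L -> depth it = N) ->
  kraft_sum N L = length L.
Proof.
  intros H. unfold kraft_sum. rewrite (sumN_const _ 1); [lia|].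
  intros it Hit. rewrite H, Nat.sub_diag by auto. reflexivity.
Qed.

Lemma kraft_sum_S N L : (forall it, In it L -> (depth it <= N)%nat) ->
  kraft_sum (S N) L = (r * kraft_sum N L)%nat.
Proof.
  unfold kraft_sum, sumN. induction L as [|a L IH]; intros H; [simpl; lia|].
  cbn [fold_right]. rewrite IH by (intros; apply H; right; auto).
  replace (S N - depth a)%nat with (S (N - depth a)) by (specialize (H a (or_introl eq_refl)); lia).
  rewrite Nat.pow_succ_r'. lia.
Qed.

Lemma merge_group D G : G <> nil -> (length G <= r)%nat ->
  (forall it, In it G -> KM q r (vec it) /\ depth it = S D) -> supp_disjoint G ->
  exists z, KM q r z /\
    forall i, weight D * z i = weighted_sum G i /\ (support_ind (z i) <= supp_count i G)%nat.
Proof.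
  intros HG Hlen HKM Hdisj.
  set (d := Item 0 (fun _ => 0)).
  set (ys := fun k i => vec (nth k G d) i).
  assert (Hsum : forall i, sum_f_R0 (fun k => ys k i) (length G - 1) = sumR (fun it => vec it i) G)
    by (intros i; exact (sum_f_R0_nth (fun it => vec it i) G d HG)).
  assert (Hlen1 : (1 <= length G)%nat) by (destruct G; [congruence|simpl; lia]).
  exists (fun i => Rpower (INR r) (- (1 / q)) * sum_f_R0 (fun k => ys k i) (length G - 1)).
  split.
  - apply KM_comb; auto.
    + intros k Hk. apply HKM, nth_In. lia.
    + intros k k' i Hk Hk' Hkk' Hy. destruct (Req_EM_T (ys k' i) 0) as [E|E]; auto.
      pose proof (supp_count_nth_2 i G d k k' ltac:(lia) ltac:(lia) Hkk' Hy E).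
      specialize (Hdisj i). lia.
  - intros i. rewrite Hsum. split.
    + rewrite <- Rmult_assoc, weight_S. symmetry. apply weighted_sum_const_depth. apply HKM.
    + destruct (supp_count i G) eqn:E; [|etransitivity; [apply support_ind_le_1|lia]].
      rewrite (sumR_0 _ _ (fun it => supp_count_0 i G it E)), Rmult_0_r, support_ind_0.
      reflexivity.
Qed.

Lemma merge_layer D : forall H,
  (forall it, In it H -> KM q r (vec it) /\ depth it = S D) -> supp_disjoint H ->
  exists H', (forall it, In it H' -> KM q r (vec it) /\ depth it = D) /\
    (forall i, weighted_sum H' i = weighted_sum H i /\ (supp_count i H' <= supp_count i H)%nat) /\
    (length H <= r * length H' < length H + r)%nat. (* length H' = ceil (length H / r) *)
Proof.
  intros H. induction H as [H IH] using (induction_ltof1 _ (@length item)).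
  intros HKM Hdisj.
  destruct H as [|it0 H0].
  { exists nil. repeat split; simpl; try tauto; lia. }
  set (H := it0 :: H0) in *.
  assert (HlenH : (1 <= length H)%nat) by (unfold H; simpl; lia).
  clearbody H.
  set (G := firstn r H). set (H1 := skipn r H).
  assert (Hsplit : H = G ++ H1) by (symmetry; apply firstn_skipn).
  assert (HinG : forall it, In it G -> In it H)
    by (intros it Hit; rewrite Hsplit; apply in_or_app; auto).
  assert (HinH1 : forall it, In it H1 -> In it H)
    by (intros it Hit; rewrite Hsplit; apply in_or_app; auto).
  assert (Hcount : forall i, supp_count i H = (supp_count i G + supp_count i H1)%nat)
    by (intros i; rewrite Hsplit at 1; apply supp_count_app).
  assert (HlenG : length G = Nat.min r (length H)) by apply length_firstn.
  assert (HlenH1 : length H1 = (length H - r)%nat) by apply length_skipn.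
  destruct (merge_group D G) as [z [Kz Hz]].
  - intros E. apply (f_equal (@length item)) in E. simpl in E. lia.
  - lia.
  - auto.
  - intros i. specialize (Hdisj i). rewrite Hcount in Hdisj. lia.
  - destruct (IH H1) as [H1' (HK' & Hc' & Hl')].
    + unfold ltof. lia.
    + auto.
    + intros i. specialize (Hdisj i). rewrite Hcount in Hdisj. lia.
    + exists (Item D z :: H1'). split; [|split].
      * intros it [<-|Hit]; auto.
      * intros i. specialize (Hc' i). specialize (Hz i).
        change (weighted_sum (Item D z :: H1') i) with (weight D * z i + weighted_sum H1' i).
        change (supp_count i (Item D z :: H1')) with (support_ind (z i) + supp_count i H1')%nat.
        rewrite Hsplit at 1 2. rewrite weighted_sum_app, supp_count_app. split; [lra|lia].
      * simpl length. rewrite Nat.mul_succ_r.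
        destruct (length H1') as [|m]; [|pose proof (Nat.mul_le_mono_l 1 (S m) r)].
        all: lia.
Qed.

Lemma kraft_merge_step N L : L <> nil ->
  (forall it, In it L -> KM q r (vec it) /\ (depth it <= S N)%nat) -> supp_disjoint L ->
  (kraft_sum (S N) L <= r ^ S N)%nat ->
  exists L', L' <> nil /\ (forall it, In it L' -> KM q r (vec it) /\ (depth it <= N)%nat) /\
    supp_disjoint L' /\ (kraft_sum N L' <= r ^ N)%nat /\
    forall i, weighted_sum L' i = weighted_sum L i.
Proof.
  intros HL HKM Hdisj Hkraft.
  set (top := fun it => (depth it =? S N)%nat).
  set (H := filter top L). set (O := filter (fun it => negb (top it)) L).
  assert (HinH : forall it, In it H -> In it L /\ depth it = S N).
  { intros it Hit. apply filter_In in Hit as [Hit E]. apply Nat.eqb_eq in E. auto. }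
  assert (HinO : forall it, In it O -> In it L /\ (depth it <= N)%nat).
  { intros it Hit. apply filter_In in Hit as [Hit E]. apply Bool.negb_true_iff, Nat.eqb_neq in E.
    specialize (HKM it Hit). split; auto; lia. }
  assert (HcountL : forall i, supp_count i L = (supp_count i H + supp_count i O)%nat)
    by (intros i; apply sumN_filter).
  destruct (merge_layer N H) as [H' (HK' & Hc' & Hl')].
  { intros it Hit. destruct (HinH it Hit) as [Hin E]. split; auto. apply HKM, Hin. }
  { intros i. specialize (Hdisj i). rewrite HcountL in Hdisj. lia. }
  exists (H' ++ O). split; [|split; [|split; [|split]]].
  - intros E. apply (f_equal (@length item)) in E. rewrite length_app in E.
    assert (HlenL : (1 <= length L)%nat) by (destruct L; [congruence|simpl; lia]).
    pose proof (filter_length top L) as Hpart. fold H O in Hpart.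
    change (length (@nil item)) with 0%nat in E. destruct (length H'); lia.
  - intros it Hit. apply in_app_iff in Hit as [Hit|Hit].
    + destruct (HK' it Hit) as [Kit ->]. auto.
    + destruct (HinO it Hit) as [Hin Hd]. split; [apply HKM, Hin|exact Hd].
  - intros i. specialize (Hdisj i). specialize (Hc' i). rewrite HcountL in Hdisj.
    rewrite supp_count_app. lia.
  - unfold kraft_sum in Hkraft |- *. rewrite (sumN_filter _ top L) in Hkraft. fold H O in Hkraft.
    rewrite sumN_app.
    fold (kraft_sum N H') (kraft_sum N O) (kraft_sum (S N) H) (kraft_sum (S N) O) in *.
    rewrite kraft_sum_const_depth in Hkraft by (intros it Hit; apply HinH, Hit).
    rewrite kraft_sum_const_depth by (intros it Hit; apply HK', Hit).
    rewrite kraft_sum_S in Hkraft by (intros it Hit; apply HinO, Hit).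
    rewrite Nat.pow_succ_r' in Hkraft.
    (* [length H' + K <= r ^ N] follows from [length H + r * K <= r ^ S N]
       because [length H' = ceil (length H / r)]. *)
    nia.
  - intros i. rewrite weighted_sum_app.
    unfold weighted_sum at 3. rewrite (sumR_filter _ top L). fold H O.
    fold (weighted_sum H i) (weighted_sum O i). rewrite (proj1 (Hc' i)). reflexivity.
Qed.

Lemma kraft_merge_nat N : forall L, L <> nil ->
  (forall it, In it L -> KM q r (vec it) /\ (depth it <= N)%nat) -> supp_disjoint L ->
  (kraft_sum N L <= r ^ N)%nat ->
  exists z, KM q r z /\ forall i, z i = weighted_sum L i.
Proof.
  induction N as [|N IH]; intros L HL HKM Hdisj Hkraft.
  - rewrite kraft_sum_const_depth in Hkraft by (intros it Hit; specialize (HKM it Hit); lia).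
    destruct L as [|it [|]]; simpl in Hkraft; try congruence; try lia.
    exists (vec it). split; [apply HKM; simpl; auto|].
    intros i. unfold weighted_sum, sumR; simpl.
    replace (depth it) with 0%nat by (specialize (HKM it (or_introl eq_refl)); lia).
    rewrite weight_0. ring.
  - destruct (kraft_merge_step N L HL HKM Hdisj Hkraft)
      as [L' (HL' & HKM' & Hdisj' & Hkraft' & HL'L)].
    destruct (IH L' HL' HKM' Hdisj' Hkraft') as [z [Kz Hz]].
    exists z. split; [exact Kz|]. intros i. rewrite Hz. apply HL'L.
Qed.

Lemma kraft_sum_INR N L : (forall it, In it L -> (depth it <= N)%nat) ->
  INR (kraft_sum N L) = INR r ^ N * sumR (fun it => / INR r ^ depth it) L.
Proof.
  unfold kraft_sum, sumN, sumR. induction L as [|a L IH]; intros HN; [simpl; ring|].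
  cbn [fold_right]. rewrite plus_INR, IH by (intros; apply HN; right; auto).
  rewrite pow_INR.
  assert (Hr : INR r <> 0) by (apply not_0_INR; lia).
  replace (INR r ^ N) with (INR r ^ (N - depth a) * INR r ^ depth a)
    by (rewrite <- pow_add; f_equal; specialize (HN a (or_introl eq_refl)); lia).
  field. apply pow_nonzero, Hr.
Qed.

Theorem kraft_merge L : L <> nil -> (forall it, In it L -> KM q r (vec it)) -> supp_disjoint L ->
  sumR (fun it => / INR r ^ depth it) L <= 1 ->
  exists z, KM q r z /\ forall i, z i = weighted_sum L i.
Proof.
  intros HL HKM Hdisj Hsum.
  set (N := list_max (map depth L)).
  assert (HN : forall it, In it L -> (depth it <= N)%nat).
  { pose proof (proj1 (list_max_le (map depth L) N) (le_n N)) as Hmax.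
    rewrite Forall_forall in Hmax. intros it Hit. apply Hmax, in_map, Hit. }
  apply (kraft_merge_nat N); auto.
  apply INR_le. rewrite kraft_sum_INR, pow_INR by exact HN.
  pose proof (pow_le (INR r) N (pos_INR r)). nra.
Qed.

End Kraft.

Lemma Series_finite_support (a : nat -> R) N :
  (forall j, (N <= j)%nat -> a j = 0) -> is_series a (sum_f_R0 a N).
Proof.
  intros Ha. apply is_series_Reals. intros eps Heps. exists N. intros n Hn.
  replace (sum_f_R0 a n) with (sum_f_R0 a N); [unfold R_dist; rewrite Rminus_eq_0, Rabs_R0; lra|].
  induction Hn as [|n Hn IH]; [reflexivity|]. simpl. rewrite <- IH, (Ha (S n)) by lia. ring.
Qed.

Lemma is_series_term_le (a : nat -> R) l j :
  (forall n, 0 <= a n) -> is_series a l -> a j <= l.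
Proof.
  intros Ha Hl. apply is_series_Reals in Hl.
  apply Rle_trans with (sum_f_R0 a j); [|apply sum_incr; auto].
  destruct j; simpl; [lra|]. pose proof (cond_pos_sum a j Ha). lra.
Qed.

Lemma rpow_Rpower u b : 0 < u -> rpow u b = Rpower u b.
Proof. intros H. unfold rpow. destruct (Rle_dec u 0); [lra|reflexivity]. Qed.

Lemma rpow_0_l b : rpow 0 b = 0.
Proof. unfold rpow. destruct (Rle_dec 0 0); [reflexivity|lra]. Qed.

Lemma rpow_nonneg u b : 0 <= rpow u b.
Proof. unfold rpow. destruct (Rle_dec u 0); [lra|left; apply exp_pos]. Qed.

Lemma rpow_le_1 t b : t <= 1 -> 0 <= b -> rpow t b <= 1.
Proof.
  intros Ht Hb. unfold rpow. destruct (Rle_dec t 0); [lra|].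
  replace 1 with (Rpower 1 b) by (unfold Rpower; rewrite ln_1, Rmult_0_r; apply exp_0).
  apply Rle_Rpower_l; lra.
Qed.

Lemma rpow_rpow_inv u p : 0 <= u -> 0 < p -> rpow (rpow u (1 / p)) p = u.
Proof.
  intros Hu Hp. destruct (Req_dec u 0) as [->|Hu0]; [rewrite !rpow_0_l; reflexivity|].
  rewrite (rpow_Rpower u), rpow_Rpower, Rpower_mult by (try apply exp_pos; lra).
  replace (1 / p * p) with 1 by (field; lra). apply Rpower_1. lra.
Qed.

Lemma Rpower_neg_INR b k : 0 < b -> Rpower b (- INR k) = / b ^ k.
Proof. intros Hb. rewrite Rpower_Ropp, Rpower_pow by exact Hb. reflexivity. Qed.

Lemma norm_pr_ge_inner q r x y : KM q r y -> Rbar_le (inner x y) (norm_pr q r x).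
Proof. intros Hy. apply (proj1 (Lub_Rbar_correct _)). exists y. auto. Qed.

Lemma norm_pr_nonneg q r x : Rbar_le 0 (norm_pr q r x).
Proof.
  set (e := inner x (unit_vec 0)).
  assert (Hopp : inner x (fun i => - unit_vec 0 i) = - e).
  { unfold e, inner. rewrite <- Series_opp. apply Series_ext. intros n. ring. }
  destruct (Rle_dec 0 e).
  - apply Rbar_le_trans with e; [simpl; lra|]. apply norm_pr_ge_inner, KM_pos.
  - apply Rbar_le_trans with (- e); [simpl; lra|]. rewrite <- Hopp. apply norm_pr_ge_inner, KM_neg.
Qed.

Lemma signed_unit_vec q r (t : R) j :
  exists y, KM q r y /\ t * y j = Rabs t /\ forall i, i <> j -> y i = 0.
Proof.
  destruct (Rle_dec 0 t) as [Ht|Ht].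
  - exists (unit_vec j). split; [apply KM_pos|]. unfold unit_vec. rewrite Nat.eqb_refl.
    split; [rewrite Rabs_pos_eq by exact Ht; ring|].
    intros i Hi. apply Nat.eqb_neq in Hi. rewrite Hi. reflexivity.
  - exists (fun i => - unit_vec j i). split; [apply KM_neg|]. unfold unit_vec. rewrite Nat.eqb_refl.
    split; [rewrite Rabs_left by lra; ring|].
    intros i Hi. apply Nat.eqb_neq in Hi. rewrite Hi. ring.
Qed.

Section Norming.

Variables (p q : R) (r : nat) (x : nat -> R) (N : nat).
Hypotheses (p_pos : 0 < p) (pq_conj : 1 / p + 1 / q = 1) (r_gt_1 : (1 < r)%nat).
Hypothesis x_supp : forall j, (N <= j)%nat -> x j = 0.
Hypothesis x_C : forall j, C_set (Rpower (INR r) (1 / p)) (x j).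

Definition abs_pow (j : nat) : R := rpow (Rabs (x j)) p.

Hypothesis abs_pow_sum_le_1 : sum_f_R0 abs_pow N <= 1.

Lemma abs_pow_series : is_series abs_pow (sum_f_R0 abs_pow N).
Proof.
  apply Series_finite_support. intros j Hj. unfold abs_pow.
  rewrite x_supp, Rabs_R0 by exact Hj. apply rpow_0_l.
Qed.

Lemma INR_r_gt_1 : 1 < INR r.
Proof. apply lt_1_INR, r_gt_1. Qed.

Lemma x_exponent j : x j = 0 \/ exists k : nat, Rabs (x j) = Rpower (INR r) (- INR k / p).
Proof.
  destruct (x_C j) as [E | [z Hz]]; [left; exact E|right].
  pose proof INR_r_gt_1 as Hr.
  rewrite powerRZ_Rpower, Rpower_mult in Hz by apply exp_pos.
  assert (Habs : Rabs (x j) = Rpower (INR r) (IZR z / p)).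
  { pose proof (exp_pos (1 / p * IZR z * ln (INR r))).
    replace (IZR z / p) with (1 / p * IZR z) by (field; lra).
    destruct Hz as [-> | ->]; [|rewrite Rabs_Ropp]; apply Rabs_pos_eq; unfold Rpower; lra. }
  assert (Hz0 : (z <= 0)%Z).
  { apply le_IZR. destruct (Rle_dec (IZR z) 0) as [h|h]; [exact h|exfalso].
    pose proof (is_series_term_le abs_pow _ j (fun n => rpow_nonneg _ _) abs_pow_series) as Hle.
    change (abs_pow j) with (rpow (Rabs (x j)) p) in Hle.
    rewrite Habs, rpow_Rpower, Rpower_mult in Hle by apply exp_pos.
    replace (IZR z / p * p) with (IZR z) in Hle by (field; lra).
    apply Rnot_le_lt in h. pose proof (Rpower_lt (INR r) 0 (IZR z) Hr h) as Hlt.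
    rewrite Rpower_O in Hlt by lra. lra. }
  exists (Z.to_nat (- z)). rewrite (INR_IZR_INZ (Z.to_nat _)), Z2Nat.id by lia.
  rewrite opp_IZR, Habs. f_equal. unfold Rdiv. ring.
Qed.

Lemma coordinate_items j : exists Lj : list item,
  (forall it, In it Lj -> KM q r (vec it)) /\ (supp_count j Lj <= 1)%nat /\
  (forall i, i <> j -> supp_count i Lj = 0%nat) /\
  sumR (fun it => / INR r ^ depth it) Lj = abs_pow j /\ x j * weighted_sum q r Lj j = abs_pow j.
Proof.
  pose proof INR_r_gt_1 as Hr.
  destruct (x_exponent j) as [E | [k Hk]].
  - exists nil. unfold abs_pow. rewrite E, Rabs_R0, rpow_0_l.
    repeat split; simpl; try tauto; try lia. unfold weighted_sum, sumR; simpl; ring.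
  - destruct (signed_unit_vec q r (x j) j) as [y (Ky & Hyj & Hy0)].
    assert (Hpow : abs_pow j = / INR r ^ k).
    { unfold abs_pow. rewrite Hk, rpow_Rpower, Rpower_mult by apply exp_pos.
      replace (- INR k / p * p) with (- INR k) by (field; lra). apply Rpower_neg_INR. lra. }
    exists (Item k y :: nil). repeat split.
    + intros it [<-|[]]. exact Ky.
    + change (support_ind (y j) + 0 <= 1)%nat. pose proof (support_ind_le_1 (y j)). lia.
    + intros i Hi. change (support_ind (y i) + 0 = 0)%nat. rewrite Hy0, support_ind_0 by exact Hi.
      reflexivity.
    + rewrite Hpow. unfold sumR; simpl. ring.
    + unfold weighted_sum, sumR, weight; simpl.
      replace (x j * (Rpower (INR r) (- INR k / q) * y j + 0))
        with (Rpower (INR r) (- INR k / q) * (x j * y j)) by ring.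
      rewrite Hyj, Hk, Hpow, <- Rpower_plus, <- Rpower_neg_INR by lra. f_equal.
      replace (- INR k) with (- INR k * (1 / p + 1 / q)) at 3 by (rewrite pq_conj; ring).
      unfold Rdiv. ring.
Qed.

Lemma coordinate_items_upto n : exists L : list item,
  (forall it, In it L -> KM q r (vec it)) /\ supp_disjoint L /\
  (forall i, (n < i)%nat -> supp_count i L = 0%nat) /\
  sumR (fun it => / INR r ^ depth it) L = sum_f_R0 abs_pow n /\
  forall j, (j <= n)%nat -> x j * weighted_sum q r L j = abs_pow j.
Proof.
  induction n as [|n IH].
  - destruct (coordinate_items 0) as [L (HK & H1 & H0 & Hs & Hx)].
    exists L. repeat split; auto.
    + intros i. destruct (Nat.eq_dec i 0) as [->|Hi]; [exact H1|rewrite H0 by exact Hi; lia].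
    + intros i Hi. apply H0. lia.
    + intros j Hj. replace j with 0%nat by lia. exact Hx.
  - destruct IH as [L (HK & Hdisj & Hout & Hs & Hx)].
    destruct (coordinate_items (S n)) as [Lj (HKj & H1j & H0j & Hsj & Hxj)].
    exists (L ++ Lj). repeat split.
    + intros it Hit. apply in_app_iff in Hit as [Hit|Hit]; auto.
    + intros i. rewrite supp_count_app. destruct (Nat.eq_dec i (S n)) as [->|Hi].
      * rewrite Hout by lia. exact H1j.
      * rewrite H0j by exact Hi. specialize (Hdisj i). lia.
    + intros i Hi. rewrite supp_count_app, Hout, H0j by lia. reflexivity.
    + rewrite sumR_app, Hs, Hsj. reflexivity.
    + intros j Hj. rewrite weighted_sum_app. destruct (Nat.eq_dec j (S n)) as [->|Hjn].
      * rewrite (weighted_sum_supp_count_0 q r _ _ (Hout (S n) (Nat.lt_succ_diag_r n))), Rplus_0_l.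
        exact Hxj.
      * rewrite (weighted_sum_supp_count_0 q r _ _ (H0j j Hjn)), Rplus_0_r. apply Hx. lia.
Qed.

Theorem abs_pow_sum_le_norm_pr : Rbar_le (sum_f_R0 abs_pow N) (norm_pr q r x).
Proof.
  destruct (coordinate_items_upto N) as [L (HK & Hdisj & Hout & Hs & Hx)].
  destruct L as [|it L].
  { rewrite <- Hs. apply norm_pr_nonneg. }
  destruct (kraft_merge q r ltac:(lia) (it :: L)) as [z [Kz Hz]];
    [congruence | exact HK | exact Hdisj | rewrite Hs; exact abs_pow_sum_le_1 |].
  replace (sum_f_R0 abs_pow N) with (inner x z); [apply norm_pr_ge_inner, Kz|].
  unfold inner. rewrite (Series_ext _ abs_pow); [apply is_series_unique, abs_pow_series|].
  intros j. rewrite Hz. destruct (le_lt_dec j N) as [Hj|Hj]; [apply Hx, Hj|].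
  rewrite weighted_sum_supp_count_0 by (apply Hout, Hj).
  unfold abs_pow. rewrite x_supp, Rabs_R0, rpow_0_l by lia. ring.
Qed.

End Norming.

Theorem mainTheorem3 (p q : R) (r : nat) (x : nat -> R) :
  1 < p -> 1 < q -> 1 / p + 1 / q = 1 -> (1 < r)%nat ->
  N_alpha_p (Rpower (INR r) (1 / p)) p x ->
  Rbar_le (Finite (rpow (lp_norm p x) p)) (norm_pr q r x).
Proof.
  intros Hp _ Hpq Hr [[N HN] [HC Hnorm]].
  assert (HS : Series (abs_pow p x) = sum_f_R0 (abs_pow p x) N)
    by exact (is_series_unique _ _ (abs_pow_series p x N HN)).
  assert (S_nonneg : 0 <= sum_f_R0 (abs_pow p x) N)
    by (apply cond_pos_sum; intros; apply rpow_nonneg).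
  unfold lp_norm in Hnorm |- *. change (fun i => rpow (Rabs (x i)) p) with (abs_pow p x) in *.
  rewrite HS in Hnorm |- *. rewrite rpow_rpow_inv by lra.
  apply (abs_pow_sum_le_norm_pr p q r x N); [lra | exact Hpq | exact Hr | exact HN | exact HC |].
  rewrite <- (rpow_rpow_inv _ p) by lra. apply rpow_le_1; lra.
Qed.
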